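(* Let $G$ be a number all of whose options are numbers. Then $G\mathbin{:}1\triangleq\{G\mid R(G)\}$ and $G\mathbin{:}(-1)\triangleq\{L(G)\mid G\}$, where $1\cong\{0\mid\ \}$ and $-1\cong\{\ \mid 0\}$ with $0\cong\{\ \mid\ \}$.
   Context: Games are short normal-play combinatorial games, written $G\cong\{L(G)\mid R(G)\}$ ($\cong$ = identical literal forms). Disjunctive sum $G+H\cong\{L(G)+H,G+L(H)\mid R(G)+H,G+R(H)\}$, negation $-G\cong\{-R(G)\mid -L(G)\}$. Ordinal sum: $G\mathbin{:}H\cong\{L(G),\,G\mathbin{:}L(H)\mid R(G),\,G\mathbin{:}R(H)\}$. A number is a game $G$ with $G^L<G<G^R$ for all options. Equivalence modulo domination: $G\triangleq H$ means that in $G+(-H)$, for every move by either player as first player in one summand, the other player has a response in the other summand after which the responder wins. *)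

From Stdlib Require Import List Bool.
Import ListNotations.

(* A (literal form of a) short game {L(G) | R(G)}; equality (=) on this type
   is identity of literal forms (the paper's ≅). *)
Inductive game : Type := Game : list game -> list game -> game.

Definition Lopts (g : game) : list game := match g with Game l _ => l end.
Definition Ropts (g : game) : list game := match g with Game _ r => r end.

Definition zero : game := Game [] [].
Definition one : game := Game [zero] [].
Definition mone : game := Game [] [zero].

Fixpoint neg (g : game) : game :=
  match g with Game l r => Game (map neg r) (map neg l) end.

(* disjunctive sum  G+H = {L(G)+H, G+L(H) | R(G)+H, G+R(H)} *)
Fixpoint add (g h : game) {struct g} : game :=
  match g with
  | Game gl gr =>
      (fix addg (h : game) : game :=
         match h with
         | Game hl hr =>
             Game (map (fun x => add x h) gl ++ map addg hl)
                  (map (fun x => add x h) gr ++ map addg hr)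
         end) h
  end.

Fixpoint ord (g h : game) {struct h} : game :=
  match h with
  | Game hl hr => Game (Lopts g ++ map (ord g) hl) (Ropts g ++ map (ord g) hr)
  end.

(* The usual order of games (normal play):
   G <= H  iff  no G^L with H <= G^L  and no H^R with H^R <= G.
   cmp g = (fun h => g <= h, fun h => h <= g). *)
Fixpoint cmp (g : game) : (game -> bool) * (game -> bool) :=
  match g with
  | Game gl gr =>
      let leg :=
        fix leg (h : game) : bool :=
          match h with
          | Game hl hr =>
              forallb (fun x => negb (snd (cmp x) h)) gl &&
              forallb (fun y => negb (geg y)) hr
          end
        with geg (h : game) : bool :=
          match h with
          | Game hl hr =>
              forallb (fun y => negb (leg y)) hl &&
              forallb (fun x => negb (fst (cmp x) h)) gr
          end
        for leg in
      let geg :=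
        fix leg (h : game) : bool :=
          match h with
          | Game hl hr =>
              forallb (fun x => negb (snd (cmp x) h)) gl &&
              forallb (fun y => negb (geg y)) hr
          end
        with geg (h : game) : bool :=
          match h with
          | Game hl hr =>
              forallb (fun y => negb (leg y)) hl &&
              forallb (fun x => negb (fst (cmp x) h)) gr
          end
        for geg in
      (leg, geg)
  end.

Definition game_le (g h : game) : bool := fst (cmp g) h.
Definition game_lt (g h : game) : bool := game_le g h && negb (game_le h g).

Definition is_number (g : game) : Prop :=
  (forall x, In x (Lopts g) -> game_lt x g = true) /\
  (forall y, In y (Ropts g) -> game_lt g y = true).

(* "Right wins moving second in X" is X <= 0; "Left wins moving second" is 0 <= X. *)

(* Equivalence modulo domination  G ≜ H : in G + (-H), for every move by either
   player as first player in one summand, the other player has a response in the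
   other summand after which the responder wins. *)
Definition dom_equiv (g h : game) : Prop :=
  (* Left moves in G to G^L + (-H); Right answers in -H *)
  (forall gl, In gl (Lopts g) ->
     exists z, In z (Ropts (neg h)) /\ game_le (add gl z) zero = true) /\
  (* Left moves in -H to G + z; Right answers in G *)
  (forall z, In z (Lopts (neg h)) ->
     exists gr, In gr (Ropts g) /\ game_le (add gr z) zero = true) /\
  (* Right moves in G to G^R + (-H); Left answers in -H *)
  (forall gr, In gr (Ropts g) ->
     exists z, In z (Lopts (neg h)) /\ game_le zero (add gr z) = true) /\
  (* Right moves in -H to G + z; Left answers in G *)
  (forall z, In z (Ropts (neg h)) ->
     exists gl, In gl (Lopts g) /\ game_le zero (add gl z) = true).

(* G:1 = {L(G), G:0 | R(G)} and G:0 = G, so G:1 only adds the left option G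
   to {L(G) | R(G)}.  Equivalence modulo domination says exactly that the
   left options of the two games dominate each other, and so do the right
   options.  Since G is a number, every G^L lies below G, so in G:1 the new
   option G dominates all of L(G); the right options coincide.  The case
   G:(-1) is dual. *)
From Stdlib Require Import List Bool.
Import ListNotations.

Lemma forallb_map {A B} (f : B -> bool) (g : A -> B) (l : list A) :
  forallb f (map g l) = forallb (fun x => f (g x)) l.
Proof. induction l as [|a l IH]; simpl; congruence. Qed.

Lemma forallb_ext_in {A} (f g : A -> bool) (l : list A) :
  (forall a, In a l -> f a = g a) -> forallb f l = forallb g l.
Proof.
  induction l as [|a l IH]; simpl; intros Hfg; [reflexivity|].
  rewrite Hfg, IH; auto.
Qed.

Fixpoint game_nested_ind (P : game -> Prop)
  (HP : forall l r, (forall x, In x l -> P x) -> (forall x, In x r -> P x) ->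
        P (Game l r))
  (g : game) : P g :=
  match g with
  | Game l r =>
      let fix all_opts (s : list game) : Forall P s :=
        match s with
        | [] => Forall_nil P
        | x :: s' => Forall_cons x (game_nested_ind P HP x) (all_opts s')
        end in
      HP l r (proj1 (Forall_forall P l) (all_opts l))
             (proj1 (Forall_forall P r) (all_opts r))
  end.

Lemma game_le_Game_cmp gl gr hl hr :
  game_le (Game gl gr) (Game hl hr) =
  forallb (fun x => negb (snd (cmp x) (Game hl hr))) gl &&
  forallb (fun y => negb (snd (cmp (Game gl gr)) y)) hr.
Proof. reflexivity. Qed.

Lemma cmp_snd_Game gl gr hl hr :
  snd (cmp (Game gl gr)) (Game hl hr) =
  forallb (fun y => negb (game_le (Game gl gr) y)) hl &&
  forallb (fun x => negb (game_le x (Game hl hr))) gr.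
Proof. reflexivity. Qed.

(* [cmp] computes [g <= h] and [h <= g] by separate mutual fixpoints.  Both
   orientations are proved together so that a lexicographic induction on
   [(g, h)] goes through. *)
Lemma cmp_snd g h : snd (cmp g) h = game_le h g /\ snd (cmp h) g = game_le g h.
Proof.
  revert h; induction g as [gl gr IHgl IHgr] using game_nested_ind.
  induction h as [hl hr IHhl IHhr] using game_nested_ind.
  rewrite !cmp_snd_Game, !game_le_Game_cmp.
  split; f_equal; apply forallb_ext_in; intros a Ha; f_equal; symmetry.
  - exact (proj2 (IHhl a Ha)).
  - exact (proj2 (IHgr a Ha _)).
  - exact (proj1 (IHgl a Ha _)).
  - exact (proj1 (IHhr a Ha)).
Qed.

Lemma game_le_Game gl gr hl hr :
  game_le (Game gl gr) (Game hl hr) =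
  forallb (fun x => negb (game_le (Game hl hr) x)) gl &&
  forallb (fun y => negb (game_le y (Game gl gr))) hr.
Proof.
  rewrite game_le_Game_cmp.
  f_equal; apply forallb_ext_in; intros; rewrite (proj1 (cmp_snd _ _)); reflexivity.
Qed.

Lemma game_le_refl g : game_le g g = true.
Proof.
  induction g as [l r IHl IHr] using game_nested_ind.
  rewrite game_le_Game; apply andb_true_intro.
  split; apply forallb_forall; intros [al ar] Ha; apply negb_true_iff;
    rewrite game_le_Game.
  - apply andb_false_intro1, not_true_iff_false; intros Hle.
    rewrite forallb_forall in Hle.
    specialize (Hle _ Ha); rewrite IHl in Hle by exact Ha; discriminate.
  - apply andb_false_intro2, not_true_iff_false; intros Hle.
    rewrite forallb_forall in Hle.
    specialize (Hle _ Ha); rewrite IHr in Hle by exact Ha; discriminate.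
Qed.

Lemma game_lt_le g h : game_lt g h = true -> game_le g h = true.
Proof. unfold game_lt; intros Hlt; apply andb_true_iff in Hlt; tauto. Qed.

(* The left options of x + (-y) are x^L - y and x - y^R, matching the
   two clauses of x <= y one for one. *)
Lemma game_le_sub x y :
  game_le x y = game_le (add x (neg y)) zero /\
  game_le y x = game_le zero (add x (neg y)).
Proof.
  revert y; induction x as [xl xr IHxl IHxr] using game_nested_ind.
  induction y as [yl yr IHyl IHyr] using game_nested_ind.
  change (neg (Game yl yr)) with (Game (map neg yr) (map neg yl)).
  change (add (Game xl xr) (Game (map neg yr) (map neg yl))) with
    (Game (map (fun a => add a (neg (Game yl yr))) xl ++
           map (add (Game xl xr)) (map neg yr))
          (map (fun a => add a (neg (Game yl yr))) xr ++
           map (add (Game xl xr)) (map neg yl))).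
  unfold zero; rewrite !game_le_Game, !forallb_app, !forallb_map; simpl.
  rewrite !andb_true_r; split; [|rewrite andb_comm];
    f_equal; apply forallb_ext_in; intros a Ha; f_equal.
  - apply IHxl; exact Ha.
  - apply IHyr; exact Ha.
  - apply IHxr; exact Ha.
  - apply IHyl; exact Ha.
Qed.

Definition majorized (A B : list game) : Prop :=
  forall a, In a A -> exists b, In b B /\ game_le a b = true.

Definition minorized (A B : list game) : Prop :=
  forall a, In a A -> exists b, In b B /\ game_le b a = true.

Lemma majorized_incl A B : incl A B -> majorized A B.
Proof. intros HAB a Ha; exists a; split; [apply HAB, Ha | apply game_le_refl]. Qed.

Lemma minorized_incl A B : incl A B -> minorized A B.
Proof. intros HAB a Ha; exists a; split; [apply HAB, Ha | apply game_le_refl]. Qed.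

Lemma majorized_singleton A g :
  (forall a, In a A -> game_le a g = true) -> majorized A [g].
Proof. intros Hle a Ha; exists g; split; [left; reflexivity | apply Hle, Ha]. Qed.

Lemma minorized_singleton A g :
  (forall a, In a A -> game_le g a = true) -> minorized A [g].
Proof. intros Hle a Ha; exists g; split; [left; reflexivity | apply Hle, Ha]. Qed.

Lemma ex_neg_le a B :
  (exists z, In z (map neg B) /\ game_le (add a z) zero = true) <->
  (exists b, In b B /\ game_le a b = true).
Proof.
  split.
  - intros [z [Hz Hle]]; apply in_map_iff in Hz as [b [<- Hb]].
    exists b; rewrite (proj1 (game_le_sub a b)); auto.
  - intros [b [Hb Hle]]; exists (neg b).
    rewrite <- (proj1 (game_le_sub a b)); auto using in_map.
Qed.

Lemma ex_neg_ge a B :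
  (exists z, In z (map neg B) /\ game_le zero (add a z) = true) <->
  (exists b, In b B /\ game_le b a = true).
Proof.
  split.
  - intros [z [Hz Hle]]; apply in_map_iff in Hz as [b [<- Hb]].
    exists b; rewrite (proj2 (game_le_sub a b)); auto.
  - intros [b [Hb Hle]]; exists (neg b).
    rewrite <- (proj2 (game_le_sub a b)); auto using in_map.
Qed.

Lemma forall_in_map_neg (P : game -> Prop) B :
  (forall z, In z (map neg B) -> P z) <-> (forall b, In b B -> P (neg b)).
Proof.
  split; intros HP.
  - intros b Hb; apply HP, in_map, Hb.
  - intros z Hz; apply in_map_iff in Hz as [b [<- Hb]]; apply HP, Hb.
Qed.

Lemma dom_equiv_iff g h :
  dom_equiv g h <->
  majorized (Lopts g) (Lopts h) /\ minorized (Ropts h) (Ropts g) /\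
  minorized (Ropts g) (Ropts h) /\ majorized (Lopts h) (Lopts g).
Proof.
  destruct h as [hl hr]; unfold dom_equiv, majorized, minorized; simpl.
  rewrite !forall_in_map_neg.
  setoid_rewrite ex_neg_le; setoid_rewrite ex_neg_ge.
  setoid_rewrite <- (proj1 (game_le_sub _ _)).
  setoid_rewrite <- (proj2 (game_le_sub _ _)).
  reflexivity.
Qed.

Lemma ord_zero g : ord g zero = g.
Proof. destruct g; simpl; rewrite !app_nil_r; reflexivity. Qed.

Lemma ord_one g : ord g one = Game (Lopts g ++ [g]) (Ropts g).
Proof.
  change (ord g one) with (Game (Lopts g ++ [ord g zero]) (Ropts g ++ [])).
  rewrite ord_zero, app_nil_r; reflexivity.
Qed.

Lemma ord_mone g : ord g mone = Game (Lopts g) (Ropts g ++ [g]).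
Proof.
  change (ord g mone) with (Game (Lopts g ++ []) (Ropts g ++ [ord g zero])).
  rewrite ord_zero, app_nil_r; reflexivity.
Qed.

Theorem corollary2p7 (G : game) :
  is_number G ->
  (forall x, In x (Lopts G) -> is_number x) ->
  (forall y, In y (Ropts G) -> is_number y) ->
  dom_equiv (ord G one) (Game [G] (Ropts G)) /\
  dom_equiv (ord G mone) (Game (Lopts G) [G]).
Proof.
  intros [HL HR] _ _.
  rewrite ord_one, ord_mone, !dom_equiv_iff; cbn [Lopts Ropts].
  refine (conj (conj _ (conj _ (conj _ _))) (conj _ (conj _ (conj _ _))));
    try solve [apply majorized_incl, incl_refl | apply minorized_incl, incl_refl
              | apply majorized_incl, incl_appr, incl_refl
              | apply minorized_incl, incl_appr, incl_refl].
  - apply majorized_singleton; intros a Ha; apply in_app_or in Ha as [Ha|[<-|[]]].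
    + apply game_lt_le, HL, Ha.
    + apply game_le_refl.
  - apply minorized_singleton; intros a Ha; apply in_app_or in Ha as [Ha|[<-|[]]].
    + apply game_lt_le, HR, Ha.
    + apply game_le_refl.
Qed.
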